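(* Let $n,d$ be positive integers and let $M=M^i_{j,t}$ be an indecomposable non-projective $A_n^{dn}$-module. The following are equivalent: (1) $\underline{\mathrm{Hom}}(M,M)\cong k$, i.e. $M$ is a stable brick; (2) $\ell(M)\le n$ or $(d-1)n+1\le\ell(M)\le dn$; (3) $t=0$ or $t=d-1$.
   Context: $A_n^{dn}=kQ/I$ ($k$ algebraically closed), $Q$ the cyclic quiver with vertices $1,\dots,n$ and arrows $i\to i+1$, $n\to1$, $I$ generated by all paths of length $dn+1$ (a symmetric Nakayama algebra). $M^i_{j,t}$ denotes the indecomposable (uniserial) module with top $S_i$, socle $S_j$, in which $S_i$ occurs exactly $t+1$ times as a composition factor; $\ell(M)$ is its number of composition factors. $\underline{\mathrm{Hom}}$ is Hom modulo morphisms factoring through projectives. *)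

From HB Require Import structures.
From mathcomp Require Import all_boot all_order all_algebra.
Set Implicit Arguments. Unset Strict Implicit. Unset Printing Implicit Defensive.
Import GRing.Theory.
Local Open Scope ring_scope.

Section Reps.
Variable k : fieldType.
Variable n : nat.

(* A finite-dimensional representation of the cyclic quiver with vertices
   'I_n (vertex v has arrow v -> ordS v).  Row-vector convention:
   the arrow v -> v+1 acts by x |-> x *m rmap v. *)
Record rep := Rep {
  rdim : 'I_n -> nat;
  rmap : forall v : 'I_n, 'M[k]_(rdim v, rdim (ordS v)) }.

Fixpoint pathmx (V : rep) (v : 'I_n) (L : nat) :
    'M[k]_(rdim V v, rdim V (iter L (@ordS n) v)) :=
  match L with
  | 0 => 1%:M
  | L'.+1 => pathmx V v L' *m rmap V (iter L' (@ordS n) v)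
  end.

(* V is a module over A_n^{dn} = kQ/I, I generated by all paths of length dn+1 *)
Definition bound (d : nat) (V : rep) : Prop :=
  forall v : 'I_n, pathmx V v (d * n).+1 = 0.

Definition fam (V W : rep) := forall v : 'I_n, 'M[k]_(rdim V v, rdim W v).

Definition is_hom (V W : rep) (f : fam V W) : Prop :=
  forall v : 'I_n, rmap V v *m f (ordS v) = f v *m rmap W v.

(* composition: first f, then g *)
Definition comp (U V W : rep) (f : fam U V) (g : fam V W) : fam U W :=
  fun v => f v *m g v.

Definition idfam (V : rep) : fam V V := fun v => 1%:M.

Definition surj (V W : rep) (f : fam V W) : Prop :=
  forall v : 'I_n, row_full (f v).

Definition projective (d : nat) (P : rep) : Prop :=
  forall (X Y : rep), bound d X -> bound d Y ->
  forall (g : fam X Y) (f : fam P Y), is_hom g -> surj g -> is_hom f ->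
  exists h : fam P X, is_hom h /\ comp h g = f.

Definition factors_proj (d : nat) (V W : rep) (f : fam V W) : Prop :=
  exists (P : rep) (g : fam V P) (h : fam P W),
    [/\ bound d P, projective d P, is_hom g, is_hom h & f = comp g h].

(* Stable Hom(M,M) = End(M)/P(M,M) is isomorphic to k: the class of the
   identity is nonzero and spans the quotient. *)
Definition stable_brick (d : nat) (M : rep) : Prop :=
  ~ factors_proj d (idfam M) /\
  forall f : fam M M, is_hom f ->
    exists c : k, factors_proj d (fun v => f v - c *: idfam M v).

(* The uniserial module with top S_i and length l: basis positions
   p = 0..l-1, position p lying at vertex (i+p) mod n, and the arrows send
   position p to position p+1 (and position l-1 to 0). *)
Definition udim (i : 'I_n) (l : nat) (v : 'I_n) : nat :=
  count (fun p => (i + p) %% n == v)%N (iota 0 l).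

(* the r-th basis position lying at vertex v *)
Definition upos (i : 'I_n) (v : 'I_n) (r : nat) : nat :=
  ((v + n - i) %% n + r * n)%N.

Definition uniserial (i : 'I_n) (l : nat) : rep :=
  @Rep (udim i l) (fun v => \matrix_(r, r') ((upos i v r).+1 == upos i (ordS v) r')%:R).

(* number of composition factors of M^i_{j,t} *)
Definition Mlen (i j : 'I_n) (t : nat) : nat := ((j + n - i) %% n + 1 + t * n)%N.

(* M^i_{j,t}: top S_i, socle S_j, S_i occurring t+1 times *)
Definition Mijt (i j : 'I_n) (t : nat) : rep := uniserial i (Mlen i j t).

End Reps.

(** The uniserial module U(i,l) of length l with top S_i is the quotient of the
    indecomposable projective Q = P_i = U(i,dn+1) by the paths of length l, so a
    morphism out of U(i,l) is determined by the image y of its top, subject only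
    to y p_l = 0.  The endomorphisms of U(i,l) send the top to combinations of
    the basis vectors at the positions rn (those lying at vertex i), and f - c id
    factors through a projective iff it lifts along Q ->> U(i,l).  The lift of
    "top |-> position rn", r > 0, is killed by p_l exactly when rn + l > dn.
    Hence U(i,l) is a stable brick iff rn + l > dn whenever 0 < rn < l, i.e. iff
    l <= n or l > (d-1)n; writing l = a + 1 + tn with a < n, this reads t = 0 or
    t = d - 1. *)

From Pilot Require Import Defs.
From mathcomp Require Import all_boot all_order all_algebra.
From mathcomp Require Import zify.
From Stdlib Require Import FunctionalExtensionality.
Set Implicit Arguments. Unset Strict Implicit. Unset Printing Implicit Defensive.

Section Positions.
Variable n : nat.
Hypothesis n_gt0 : 0 < n.
Variable i : 'I_n.

Definition uoff (w : 'I_n) := (w + n - i) %% n.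

Lemma uoff_lt w : uoff w < n.
Proof. by rewrite ltn_pmod. Qed.

Lemma vertex_uoff (w : 'I_n) : (i + uoff w) %% n = w.
Proof.
rewrite /uoff modnDmr.
have -> : i + (w + n - i) = w + n by rewrite subnKC // ltnW // ltn_addl.
by rewrite modnDr modn_small.
Qed.

Lemma uoff_vertex x (w : 'I_n) : (i + x) %% n = w -> x %% n = uoff w.
Proof.
move=> xw; have : i + x == i + uoff w %[mod n] by rewrite vertex_uoff xw.
by rewrite eqn_modDl => /eqP ->; rewrite modn_small // uoff_lt.
Qed.

Lemma vertex_upos (w : 'I_n) r : (i + upos i w r) %% n = w.
Proof. by rewrite /upos addnA -modnDmr modnMl addn0 -/(uoff w) vertex_uoff. Qed.

Lemma val_iter_ordS m (v : 'I_n) : val (iter m (@ordS n) v) = (v + m) %% n.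
Proof.
elim: m => [|m IH] /=; first by rewrite addn0 modn_small.
by rewrite IH /= -addn1 modnDml -addnA addn1.
Qed.

Lemma vertex_top : (i + 0) %% n = i.
Proof. by rewrite addn0 modn_small. Qed.

Lemma vertex_addn q m (v : 'I_n) : (i + q) %% n = v ->
  (i + (q + m)) %% n = iter m (@ordS n) v.
Proof. by move=> qv; rewrite val_iter_ordS addnA -modnDml qv. Qed.

Lemma iter_ordS_vertex q (w : 'I_n) : (i + q) %% n = w -> iter q (@ordS n) i = w.
Proof. by move=> qw; apply: val_inj; rewrite val_iter_ordS. Qed.

Lemma iter_upos (w : 'I_n) r : iter (upos i w r) (@ordS n) i = w.
Proof. exact/iter_ordS_vertex/vertex_upos. Qed.

Lemma upos_top r : upos i i r = r * n.
Proof. by rewrite /upos addKn modnn. Qed.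

Lemma upos_inj (w : 'I_n) : injective (upos i w).
Proof. by move=> a b /addnI /eqP; rewrite eqn_pmul2r // => /eqP. Qed.

Lemma ltn_udim L (w : 'I_n) r : (r < udim i L w) = (upos i w r < L).
Proof.
elim: L r => [|L IH] r; first by rewrite /udim /= ltn0.
have -> : udim i L.+1 w = udim i L w + ((i + L) %% n == w).
  by rewrite /udim -addn1 iotaD count_cat /= addn0 add0n.
rewrite /upos -/(uoff w); case: eqP => [Lw|Lw].
- set q := L %/ n.
  have eL : L = uoff w + q * n by rewrite -(uoff_vertex Lw) addnC -divn_eq.
  have ltn_q r' : (r' < udim i L w) = (r' < q).
    by rewrite IH /upos -/(uoff w) {1}eL ltn_add2l ltn_pmul2r.
  have -> : udim i L w = q.
    by have := ltn_q q; have := ltn_q (udim i L w); rewrite !ltnn; case: ltngtP.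
  by rewrite addn1 ltnS {1}eL ltnS leq_add2l leq_pmul2r.
- rewrite addn0 IH /upos -/(uoff w) [in RHS]ltnS [in RHS]leq_eqVlt.
  case: eqP => //= e; case: Lw; by rewrite -e -/(upos i w r) vertex_upos.
Qed.

End Positions.

Import GRing.Theory.
Local Open Scope ring_scope.

Section Basis.
Variable k : fieldType.
Variable n : nat.
Hypothesis n_gt0 : (0 < n)%N.
Variable i : 'I_n.

(* Zero when no basis position q of U(i,L) lies at w, in particular when L <= q. *)
Definition ubasis L (w : 'I_n) q : 'rV[k]_(udim i L w) := \row_r (upos i w r == q)%:R.

Lemma upos_ord_inj L (w : 'I_n) : injective (fun r : 'I_(udim i L w) => upos i w r).
Proof. by move=> a b /(upos_inj n_gt0) /val_inj. Qed.

Lemma upos_ord_lt L (w : 'I_n) (r : 'I_(udim i L w)) : (upos i w r < L)%N.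
Proof. by rewrite -ltn_udim. Qed.

Lemma exists_upos L (w : 'I_n) q : (q < L)%N -> ((i + q) %% n)%N = w ->
  exists r : 'I_(udim i L w), upos i w r = q.
Proof.
move=> qL qw.
have eq : upos i w (q %/ n) = q.
  by rewrite /upos -/(uoff i w) -(uoff_vertex n_gt0 qw) addnC -divn_eq.
have lt : (q %/ n < udim i L w)%N by rewrite ltn_udim // eq.
by exists (Ordinal lt).
Qed.

Lemma ubasis_ge L w q : (L <= q)%N -> ubasis L w q = 0.
Proof.
move=> Lq; apply/rowP => c; rewrite !mxE.
by case: eqP (upos_ord_lt c) => // ->; rewrite ltnNge Lq.
Qed.

Lemma delta_ubasis L w (r : 'I_(udim i L w)) : 'e_r = ubasis L w (upos i w r).
Proof. by apply/rowP => c; rewrite !mxE eqxx (inj_eq (@upos_ord_inj L w)). Qed.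

Lemma ubasis_rmap L (w : 'I_n) q : ((i + q) %% n)%N = w ->
  ubasis L w q *m rmap (uniserial k i L) w = ubasis L (ordS w) q.+1.
Proof.
move=> qw; case: (ltnP q L) => [qL|Lq]; last by rewrite !ubasis_ge ?mul0mx // ltnW.
have [r <-] := exists_upos qL qw.
by rewrite -delta_ubasis -rowE; apply/rowP => c; rewrite !mxE eq_sym.
Qed.

Lemma ubasis_pathmx L m (v : 'I_n) q : ((i + q) %% n)%N = v ->
  ubasis L v q *m pathmx (uniserial k i L) v m = ubasis L (iter m (@ordS n) v) (q + m)%N.
Proof.
move=> qv; elim: m => [|m IH] /=; first by rewrite mulmx1 addn0.
by rewrite mulmxA IH ubasis_rmap ?addnS // (vertex_addn _ qv).
Qed.

Lemma ubasis0_pathmx L m :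
  ubasis L i 0 *m pathmx (uniserial k i L) i m = ubasis L (iter m (@ordS n) i) m.
Proof. by rewrite ubasis_pathmx ?vertex_top. Qed.

Lemma mulmx_shift_entry L L' (w w' : 'I_n) m (A : 'M[k]_(udim i L w, udim i L' w'))
    (x : 'rV_(udim i L w)) (r0 : 'I_(udim i L w)) (c : 'I_(udim i L' w')) :
  (forall r : 'I_(udim i L w),
     ubasis L w (upos i w r) *m A = ubasis L' w' (upos i w r + m)%N) ->
  upos i w' c = (upos i w r0 + m)%N -> (x *m A) 0 c = x 0 r0.
Proof.
move=> shiftA c_r0.
have colA : col c A = delta_mx r0 0.
  apply/colP => r; rewrite !mxE andbT.
  have -> : A r c = row r A 0 c by rewrite mxE.
  by rewrite rowE delta_ubasis shiftA mxE c_r0 eqn_add2r (inj_eq (@upos_ord_inj _ _)) eq_sym.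
have -> : (x *m A) 0 c = col c (x *m A) 0 0 by rewrite [RHS]mxE.
by rewrite colE -mulmxA -colE colA -colE mxE.
Qed.

End Basis.

Section Homs.
Variable k : fieldType.
Variable n : nat.

Lemma fam_ext (V W : rep k n) (f g : fam V W) : (forall v, f v = g v) -> f = g.
Proof. exact: functional_extensionality_dep. Qed.

Lemma is_hom_id (V : rep k n) : is_hom (idfam V).
Proof. by move=> v; rewrite /idfam mulmx1 mul1mx. Qed.

Lemma is_hom_comp (U V W : rep k n) (f : fam U V) (g : fam V W) :
  is_hom f -> is_hom g -> is_hom (Defs.comp f g).
Proof. by move=> hf hg v; rewrite /Defs.comp mulmxA hf -mulmxA hg mulmxA. Qed.

Lemma is_homB (V W : rep k n) (f g : fam V W) :
  is_hom f -> is_hom g -> is_hom (fun v => f v - g v).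
Proof. by move=> hf hg v; rewrite mulmxBr mulmxBl hf hg. Qed.

Lemma is_homZ (V W : rep k n) (f : fam V W) c : is_hom f -> is_hom (fun v => c *: f v).
Proof. by move=> hf v; rewrite -scalemxAl -scalemxAr hf. Qed.

Lemma pathmx_hom (V W : rep k n) (f : fam V W) v m : is_hom f ->
  pathmx V v m *m f (iter m (@ordS n) v) = f v *m pathmx W v m.
Proof.
move=> hf; elim: m => [|m IH] /=; first by rewrite mul1mx mulmx1.
by rewrite -mulmxA hf mulmxA IH mulmxA.
Qed.

Lemma factors_proj_id_projective d (V : rep k n) :
  factors_proj d (idfam V) -> projective d V.
Proof.
move=> [P [g [h [_ projP hg hh gh]]]] X Y bX bY p f hp surj_p hf.
have [f' [hf' f'p]] := projP X Y bX bY p (Defs.comp h f) hp surj_p (is_hom_comp hh hf).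
exists (Defs.comp g f'); split; first exact: is_hom_comp.
apply: fam_ext => v; rewrite /Defs.comp -mulmxA.
have -> : f' v *m p v = h v *m f v by have := f_equal (fun F => F v) f'p.
by rewrite mulmxA -/(Defs.comp g h v) -gh /idfam mul1mx.
Qed.

(* Position p of U(i,L) lies at vertex iter p ordS i, which is only
   propositionally equal to the vertex w indexing the row. *)
Definition rowcast (X : rep k n) (u w : 'I_n) (e : u = w) (x : 'rV[k]_(rdim X u)) :
  'rV[k]_(rdim X w) := match e in _ = w return 'rV[k]_(rdim X w) with erefl => x end.

Lemma rowcast_id X u (e : u = u) x : @rowcast X u u e x = x.
Proof. by rewrite (eq_irrelevance e erefl). Qed.

Lemma rowcast0 X u w (e : u = w) : @rowcast X u w e 0 = 0.
Proof. by case: w / e. Qed.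

Lemma rowcast_rmap X u w (e : u = w) (e' : ordS u = ordS w) x :
  @rowcast X u w e x *m rmap X w = rowcast e' (x *m rmap X u).
Proof. by case: w / e e' => e'; rewrite !rowcast_id. Qed.

End Homs.

Section UniversalProperty.
Variable k : fieldType.
Variable n : nat.
Hypothesis n_gt0 : (0 < n)%N.
Variable i : 'I_n.

Section Extension.
Variable L : nat.
Hypothesis L_gt0 : (0 < L)%N.
Variable X : rep k n.
Variable y : 'rV[k]_(rdim X i).
Hypothesis y_path : y *m pathmx X i L = 0.

(* The morphism U(i,L) -> X sending the top to y, hence position p to y times
   the path of length p. *)
Definition uext : fam (uniserial k i L) X := fun w =>
  \matrix_(r < udim i L w) rowcast (iter_upos i w r) (y *m pathmx X i (upos i w r)).

Lemma rowcast_pathmx_eq p p' (w : 'I_n)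
    (e : iter p (@ordS n) i = w) (e' : iter p' (@ordS n) i = w) :
  p = p' -> rowcast e (y *m pathmx X i p) = rowcast e' (y *m pathmx X i p').
Proof. by move=> pp'; subst p'; rewrite (eq_irrelevance e e'). Qed.

Lemma uext_ubasis (w : 'I_n) q (e : iter q (@ordS n) i = w) : (q < L)%N ->
  ubasis k i L w q *m uext w = rowcast e (y *m pathmx X i q).
Proof.
move=> qL; have qw : ((i + q) %% n)%N = w by rewrite -e val_iter_ordS.
have [r er] := exists_upos n_gt0 qL qw.
have -> : ubasis k i L w q = 'e_r by rewrite delta_ubasis // er.
by rewrite -rowE rowK; apply: rowcast_pathmx_eq.
Qed.

Lemma uext_top : ubasis k i L i 0 *m uext i = y.
Proof. by rewrite (@uext_ubasis i 0 erefl) /= ?mulmx1. Qed.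

Lemma uext_hom : is_hom uext.
Proof.
move=> v; apply/row_matrixP => r; rewrite !row_mul rowK.
set p := upos i v r; have pL : (p < L)%N by rewrite -ltn_udim.
have -> : row r (rmap (uniserial k i L) v) = ubasis k i L (ordS v) p.+1.
  by apply/rowP => c; rewrite !mxE eq_sym.
have eS : iter p.+1 (@ordS n) i = ordS v by rewrite /= iter_upos.
rewrite (rowcast_rmap _ eS) -mulmxA.
case: (ltnP p.+1 L) => [pSL|]; first exact: uext_ubasis.
move=> LpS; have pSL : p.+1 = L by apply/eqP; rewrite eqn_leq LpS pL.
have eL : iter L (@ordS n) i = ordS v by rewrite -pSL.
by rewrite ubasis_ge // mul0mx (rowcast_pathmx_eq eS eL pSL) y_path rowcast0.
Qed.

End Extension.

Lemma uhom_eq L (X : rep k n) (f g : fam (uniserial k i L) X) : is_hom f -> is_hom g ->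
  ubasis k i L i 0 *m f i = ubasis k i L i 0 *m g i -> f = g.
Proof.
move=> hf hg fg_top; apply: fam_ext => v; apply/row_matrixP => r.
rewrite !rowE delta_ubasis //.
suff fg p w (e : iter p (@ordS n) i = w) : ubasis k i L w p *m f w = ubasis k i L w p *m g w.
  exact: fg (iter_upos i v r).
case: w / e; rewrite -ubasis0_pathmx // -!mulmxA.
by rewrite (pathmx_hom i p hf) (pathmx_hom i p hg) !mulmxA fg_top.
Qed.

End UniversalProperty.

Section Projective.
Variable k : fieldType.
Variable n : nat.
Hypothesis n_gt0 : (0 < n)%N.
Variable i : 'I_n.
Variable d : nat.

Notation Q := (uniserial k i (d * n).+1).

Lemma uniserial_bound L : (L <= (d * n).+1)%N -> bound d (uniserial k i L).
Proof.
move=> LQ v; apply/row_matrixP => r.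
rewrite row0 rowE delta_ubasis // ubasis_pathmx ?vertex_upos //.
by rewrite ubasis_ge // (leq_trans LQ) // leq_addl.
Qed.

Lemma bound_uniserial_leq L : bound d (uniserial k i L) -> (L <= (d * n).+1)%N.
Proof.
move=> bL; rewrite leqNgt; apply/negP => QL.
have [r er] := exists_upos n_gt0 QL (esym (val_iter_ordS (d * n).+1 i)).
have := ubasis0_pathmx k n_gt0 i L (d * n).+1; rewrite bL mulmx0.
by move/rowP/(_ r); rewrite !mxE er eqxx => /eqP; rewrite eq_sym oner_eq0.
Qed.

Lemma uniserial_projective : projective d Q.
Proof.
move=> X Y bX bY p f hp surj_p hf.
set y := ubasis k i (d * n).+1 i 0 *m f i.
have [B pB] := row_fullP (surj_p i).
have x_path : (y *m B) *m pathmx X i (d * n).+1 = 0 by rewrite bX mulmx0.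
have hx := uext_hom n_gt0 x_path.
exists (uext (d * n).+1 (y *m B)); split=> //.
apply: uhom_eq => //; first exact: is_hom_comp.
by rewrite /Defs.comp mulmxA uext_top // -mulmxA pB mulmx1.
Qed.

Lemma bound_nonprojective_leq L :
  bound d (uniserial k i L) -> ~ projective d (uniserial k i L) -> (L <= d * n)%N.
Proof.
move=> bL nP; rewrite -ltnS ltn_neqAle bound_uniserial_leq // andbT.
by apply/eqP => LQ; apply: nP; rewrite LQ; exact: uniserial_projective.
Qed.

End Projective.

Section Quotient.
Variable k : fieldType.
Variable n : nat.
Hypothesis n_gt0 : (0 < n)%N.
Variable i : 'I_n.
Variables L l : nat.
Hypothesis l_le : (l <= L)%N.

Definition uproj : fam (uniserial k i L) (uniserial k i l) :=
  uext L (X := uniserial k i l) (ubasis k i l i 0).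

Lemma uproj_hom : is_hom uproj.
Proof.
apply: (uext_hom n_gt0).
by rewrite ubasis0_pathmx // ubasis_ge.
Qed.

Lemma rowcast_ubasis u w (e : u = w) q :
  @rowcast k n (uniserial k i l) u w e (ubasis k i l u q) = ubasis k i l w q.
Proof. by case: w / e; rewrite rowcast_id. Qed.

Lemma uproj_ubasis (w : 'I_n) q : (q < L)%N -> ((i + q) %% n)%N = w ->
  ubasis k i L w q *m uproj w = ubasis k i l w q.
Proof.
move=> qL qw.
by rewrite (uext_ubasis n_gt0 _ (iter_ordS_vertex qw)) // ubasis0_pathmx // rowcast_ubasis.
Qed.

Lemma uproj_surj : surj uproj.
Proof.
move=> v; apply/row_fullP; exists (\matrix_(r < udim i l v) ubasis k i L v (upos i v r)).
apply/row_matrixP => r; rewrite row_mul rowK row1 uproj_ubasis ?vertex_upos -?delta_ubasis //.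
exact: leq_trans (upos_ord_lt n_gt0 r) l_le.
Qed.

End Quotient.

Section StableBrick.
Variable k : fieldType.
Variable n : nat.
Hypothesis n_gt0 : (0 < n)%N.
Variable i : 'I_n.
Variable d : nat.

Notation Q := (uniserial k i (d * n).+1).

Lemma factors_proj_uproj l (V : rep k n) (f : fam V (uniserial k i l)) :
  (l <= (d * n).+1)%N -> factors_proj d f ->
  exists2 gam : fam V Q, is_hom gam & f = Defs.comp gam (uproj k i (d * n).+1 l).
Proof.
move=> lQ [P [g [h [_ projP hg hh ->]]]].
have [h' [hh' h'_uproj]] := projP _ _ (uniserial_bound k n_gt0 i (leqnn _))
  (uniserial_bound k n_gt0 i lQ) _ h (uproj_hom k n_gt0 i lQ) (uproj_surj k n_gt0 i lQ) hh.
exists (Defs.comp g h'); first exact: is_hom_comp.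
by rewrite -h'_uproj; apply: fam_ext => v; rewrite /Defs.comp mulmxA.
Qed.

Lemma ker_pathmx_uproj_entry l (w : 'I_n) (z : 'rV_(udim i (d * n).+1 w))
    (r : 'I_(udim i l w)) :
  z *m pathmx Q w l = 0 -> (upos i w r + l <= d * n)%N ->
  (z *m uproj k i (d * n).+1 l w) 0 r = 0.
Proof.
move=> z_path short.
have rQ : (upos i w r < (d * n).+1)%N by rewrite ltnS (leq_trans _ short) ?leq_addr.
have [rq erq] := exists_upos n_gt0 rQ (vertex_upos i w r).
have [c ec] := exists_upos n_gt0 (short : upos i w r + l < (d * n).+1)%N
  (vertex_addn l (vertex_upos i w r)).
have -> : (z *m uproj k i (d * n).+1 l w) 0 r = z 0 rq.
  apply: (mulmx_shift_entry n_gt0 (m := 0)); last by rewrite erq addn0.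
  by move=> r'; rewrite addn0 uproj_ubasis ?vertex_upos ?upos_ord_lt.
rewrite -(mulmx_shift_entry n_gt0 (m := l) (A := pathmx Q w l) z (c := c)) ?z_path ?mxE //.
  by move=> r'; rewrite ubasis_pathmx ?vertex_upos.
by rewrite ec erq.
Qed.

Lemma uniserial_not_stable_brick l :
  (n < l)%N -> (l <= (d - 1) * n)%N -> ~ stable_brick d (uniserial k i l).
Proof.
move=> nl l_le [_ brick].
have l_dn : (l <= (d * n).+1)%N.
  by apply: leq_trans l_le _; rewrite leqW // leq_mul2r leq_subr orbT.
have vn : ((i + n) %% n)%N = i by rewrite modnDr modn_small.
(* s sends the top to position n.  If s - c id factored through Q, the image z
   in Q of the top would be killed by p_l, yet have coordinate 1 at position n,
   which p_l moves to position n + l <= dn, still inside Q. *)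
have s_path : ubasis k i l i n *m pathmx (uniserial k i l) i l = 0.
  by rewrite ubasis_pathmx // ubasis_ge // leq_addl.
have [c /(factors_proj_uproj l_dn) [gam hgam s_c]] := brick _ (uext_hom n_gt0 s_path).
set z := ubasis k i l i 0 *m gam i.
have z_path : z *m pathmx Q i l = 0.
  by rewrite -mulmxA -(pathmx_hom i l hgam) mulmxA ubasis0_pathmx // ubasis_ge // mul0mx.
have z_uproj : z *m uproj k i (d * n).+1 l i = ubasis k i l i n - c *: ubasis k i l i 0.
  have := f_equal (fun F => ubasis k i l i 0 *m F i) s_c; rewrite /Defs.comp mulmxA => <-.
  by rewrite mulmxBr (uext_top n_gt0 (ltn_trans n_gt0 nl)) /idfam -scalemxAr mulmx1.
have [r er] := exists_upos n_gt0 nl vn.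
have short : (upos i i r + l <= d * n)%N.
  by rewrite er; nia.
have := ker_pathmx_uproj_entry z_path short.
rewrite z_uproj !mxE er eqxx (gtn_eqF n_gt0) mulr0 subr0 => /eqP.
by rewrite oner_eq0.
Qed.

Lemma uniserial_stable_brick l :
    (0 < l)%N -> (l <= d * n)%N -> ~ projective d (uniserial k i l) ->
    (forall r : 'I_(udim i l i), (0 < r)%N -> ((d * n).+1 <= upos i i r + l)%N) ->
  stable_brick d (uniserial k i l).
Proof.
move=> l_gt0 l_le nP top_long; split; first by move/factors_proj_id_projective.
move=> f hf; set x := ubasis k i l i 0 *m f i.
have [r0 er0] := exists_upos n_gt0 l_gt0 (vertex_top i).
have r0_eq0 : nat_of_ord r0 = 0%N by apply: (@upos_inj _ n_gt0 i i); rewrite er0 upos_top.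
exists (x 0 r0).
set coef := fun r : 'I_(udim i l i) => x 0 r - x 0 r0 * (r == r0)%:R.
set y := \sum_r coef r *: ubasis k i (d * n).+1 i (upos i i r).
have y_path : y *m pathmx Q i l = 0.
  rewrite /y mulmx_suml big1 // => r _; rewrite -scalemxAl ubasis_pathmx ?vertex_upos //.
  have [->|r_neq0] := eqVneq r r0; first by rewrite /coef eqxx mulr1 subrr scale0r.
  rewrite ubasis_ge ?scaler0 // top_long // lt0n -r0_eq0.
  by apply: contra r_neq0 => /eqP /val_inj ->.
have l_Q : (l <= (d * n).+1)%N by rewrite leqW.
have hy := uext_hom n_gt0 y_path.
have hp := uproj_hom k n_gt0 i l_Q.
exists Q, (uext l (X := Q) y), (uproj k i (d * n).+1 l); split=> //.
- exact: uniserial_bound.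
- exact: uniserial_projective.
apply: uhom_eq => //.
- exact/is_homB/is_homZ/is_hom_id.
- exact: is_hom_comp.
rewrite /Defs.comp mulmxA uext_top // /y mulmx_suml mulmxBr /idfam -scalemxAr mulmx1 -/x.
clearbody x; rewrite [LHS]row_sum_delta; apply: eq_bigr => r _.
rewrite -scalemxAl uproj_ubasis ?vertex_upos -?delta_ubasis //; last first.
  by rewrite ltnS (leq_trans _ l_le) // ltnW // upos_ord_lt.
by rewrite /coef !mxE -[X in (_ == X)]er0 (inj_eq (@upos_inj _ n_gt0 i i)).
Qed.

Lemma uniserial_stable_brickP l :
    (0 < l)%N -> (l <= d * n)%N -> ~ projective d (uniserial k i l) ->
  stable_brick d (uniserial k i l) <-> (l <= n)%N \/ ((d - 1) * n < l <= d * n)%N.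
Proof.
move=> l_gt0 l_le nP; split.
- move=> brick; case: (leqP l n) => [|nl]; [by left | right].
  rewrite l_le andbT ltnNge; apply/negP => l_mid.
  exact: uniserial_not_stable_brick nl l_mid brick.
- move=> l_range; apply: uniserial_stable_brick => // r r_gt0.
  have := upos_ord_lt n_gt0 r; rewrite upos_top.
  by case: l_range => [|/andP [? _]]; nia.
Qed.

End StableBrick.

Lemma Mlen_rangeP n d (i j : 'I_n) t :
  (Mlen i j t <= n)%N \/ ((d - 1) * n < Mlen i j t <= d * n)%N <-> t = 0%N \/ t = (d - 1)%N.
Proof.
have : ((j + n - i) %% n < n)%N by rewrite ltn_pmod // (leq_ltn_trans _ (ltn_ord i)).
rewrite /Mlen; set a := (_ %% n)%N => a_lt; split.
- by case=> [|/andP [? ?]]; [left | right]; nia.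
- case=> ->; first by left; nia.
  by case: d => [|d]; [left | right; apply/andP; split]; nia.
Qed.

Theorem corollary2p11 (k : closedFieldType) (n d : nat) (i j : 'I_n) (t : nat) :
  (0 < n)%N -> (0 < d)%N ->
  bound d (Mijt k i j t) ->
  ~ projective d (Mijt k i j t) ->
  (stable_brick d (Mijt k i j t) <->
     ((Mlen i j t <= n)%N \/ ((d - 1) * n < Mlen i j t <= d * n)%N)) /\
  (((Mlen i j t <= n)%N \/ ((d - 1) * n < Mlen i j t <= d * n)%N) <->
     (t = 0%N \/ t = (d - 1)%N)).
Proof.
move=> n_gt0 _ bM nP; split; last exact: Mlen_rangeP.
apply: (uniserial_stable_brickP n_gt0) => //; first by rewrite /Mlen addn1 addSn.
exact: (bound_nonprojective_leq n_gt0 bM nP).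
Qed.
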